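(* For $0<x\le y<1$, $$I(x,y):=\int_0^{\mathrm{arcosh}(1/y)}\frac{dt}{\sqrt{1-x^2\cosh^2t}}\le K\big(\sqrt{1-x^2}\big),$$ with equality only for $x=y$.
   Context: $K(k)=\int_0^{\pi/2}(1-k^2\sin^2\tau)^{-1/2}d\tau$ is the complete elliptic integral of the first kind, $0\le k<1$. *)

From HB Require Import structures.
From mathcomp Require Import all_boot all_order all_algebra.
From mathcomp Require Import all_classical all_reals all_analysis.
Set Implicit Arguments. Unset Strict Implicit. Unset Printing Implicit Defensive.
Import Order.TTheory GRing.Theory Num.Theory.
Local Open Scope ring_scope.
Local Open Scope classical_set_scope.

Definition cosh {R : realType} (t : R) : R := (expR t + expR (- t)) / 2.
Definition arcosh {R : realType} (z : R) : R := ln (z + Num.sqrt (z ^+ 2 - 1)).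

Definition ellK {R : realType} (k : R) : \bar R :=
  (\int[@lebesgue_measure R]_(tau in `[0%R, (pi / 2)%R]) ((Num.sqrt (1 - k ^+ 2 * sin tau ^+ 2))^-1)%:E)%E.

(* I(x,y) = int_0^{arcosh(1/y)} dt / sqrt(1 - x^2 cosh^2 t)  (Lebesgue integral of a
   nonnegative function, possibly improper at the upper endpoint when x = y) *)
Definition Ixy {R : realType} (x y : R) : \bar R :=
  (\int[@lebesgue_measure R]_(t in `[0%R, arcosh y^-1]) ((Num.sqrt (1 - x ^+ 2 * cosh t ^+ 2))^-1)%:E)%E.

From HB Require Import structures.
From mathcomp Require Import all_boot all_order all_algebra.
From mathcomp Require Import all_classical all_reals all_analysis.
From mathcomp Require Import measurable_realfun.
From mathcomp.algebra_tactics Require Import ring lra.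
Import Order.TTheory GRing.Theory Num.Theory.
Import numFieldNormedType.Exports.
Set Implicit Arguments. Unset Strict Implicit.
Local Open Scope ring_scope.
Local Open Scope classical_set_scope.

(* Put k = sqrt (1 - x^2).  The substitution t = artanh (k sin th) maps [0, pi/2[
   increasingly onto [0, arcosh (1/x)[ and, since cosh^2 (artanh u) = 1 / (1 - u^2),
   turns dt / sqrt (1 - x^2 cosh^2 t) into dth / sqrt (1 - k^2 sin^2 th).  As I(x, x)
   is improper at arcosh (1/x), the substitution is made on [0, c] and c -> pi/2;
   this gives I(x, x) = K(k) < +oo.  For y > x, I(x, y) misses the piece
   ]arcosh (1/y), arcosh (1/x)[ of I(x, x), on which the integrand is at least 1,
   so I(x, y) < I(x, x). *)

Section hyperbolic.
Variable R : realType.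
Implicit Types t s u z : R.

Lemma coshN t : cosh (- t) = cosh t.
Proof. by rewrite /cosh opprK addrC. Qed.

Lemma cosh_ge1 t : 1 <= cosh t.
Proof.
rewrite /cosh expRN ler_pdivlMr // mul1r.
have e0 := expR_gt0 t; set e := expR t in e0 *.
have -> : e + e^-1 = (e - 1) ^+ 2 / e + 2 by field; rewrite gt_eqF.
by rewrite lerDr divr_ge0 ?sqr_ge0 ?ltW.
Qed.

Lemma cosh_lt t s : 0 <= t -> t < s -> cosh t < cosh s.
Proof.
move=> t0 ts; rewrite /cosh !expRN ltr_pM2r //.
have a1 : 1 <= expR t by rewrite -expR0 ler_expR.
have ab : expR t < expR s by rewrite ltr_expR.
set a := expR t in a1 ab *; set b := expR s in ab *.
have -> : b + b^-1 = a + a^-1 + (b - a) * (a * b - 1) / (a * b).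
  by field; rewrite !gt_eqF //; lra.
by rewrite ltrDl !divr_gt0 ?mulr_gt0 ?subr_gt0 //; nra.
Qed.

Lemma cosh_norm t : cosh `|t| = cosh t.
Proof. by case: (ger0P t) => // _; rewrite coshN. Qed.

Lemma continuous_cosh : continuous (@cosh R).
Proof.
move=> t; apply: cvgM; last exact: cvg_cst.
apply: cvgD; first exact: continuous_expR.
by apply: continuous_comp; [exact: continuousN | exact: continuous_expR].
Qed.

Lemma cosh_arcosh z : 1 <= z -> cosh (arcosh z) = z.
Proof.
move=> z1; rewrite /cosh /arcosh expRN.
have w0 : 0 <= Num.sqrt (z ^+ 2 - 1) := sqrtr_ge0 _.
have w2 : Num.sqrt (z ^+ 2 - 1) ^+ 2 = z ^+ 2 - 1.
  by rewrite sqr_sqrtr // subr_ge0 expr_ge1 // (le_trans ler01 z1).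
set w := Num.sqrt _ in w0 w2 *.
rewrite lnK ?posrE; last lra.
have zw0 : z + w != 0 by rewrite gt_eqF //; lra.
have -> : (z + w)^-1 = z - w.
  apply: (mulfI zw0); rewrite mulfV //.
  have -> : (z + w) * (z - w) = z ^+ 2 - w ^+ 2 by ring.
  by rewrite w2; ring.
by field.
Qed.

Lemma arcosh_ge0 z : 1 <= z -> 0 <= arcosh z.
Proof. by move=> z1; rewrite ln_ge0 // -[1]addr0 lerD ?sqrtr_ge0. Qed.

Lemma arcosh_lt : {in [pred z | 1 <= z] &, {homo @arcosh R : z z' / z < z'}}.
Proof.
move=> z z'; rewrite !inE => z1 z'1 zz'.
have sqrt_le : Num.sqrt (z ^+ 2 - 1) <= Num.sqrt (z' ^+ 2 - 1).
  rewrite ler_sqrt; last by rewrite subr_ge0 expr_ge1 //; lra.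
  by rewrite lerD2r ler_pXn2r ?nnegrE //; lra.
rewrite ltr_ln ?posrE ?ltr_leD //; rewrite ltr_wpDr ?sqrtr_ge0 //; lra.
Qed.

Definition artanh u : R := (ln (1 + u) - ln (1 - u)) / 2.

Lemma artanh0 : artanh 0 = 0.
Proof. by rewrite /artanh addr0 subr0 subrr mul0r. Qed.

Lemma is_derive_artanh u : -1 < u < 1 -> is_derive u 1 artanh (1 - u ^+ 2)^-1.
Proof.
move=> /andP[u_gtN1 u_lt1].
have d_plus := is_derive1_comp (is_derive1_ln (x := 1 + u) _)
  (is_deriveD (is_derive_cst (1 : R) u 1) (is_derive_id u 1)).
have d_minus := is_derive1_comp (g := cst 1 - id) (is_derive1_ln (x := 1 - u) _)
  (is_deriveB (is_derive_cst (1 : R) u 1) (is_derive_id u 1)).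
have -> : artanh = 2^-1 \*: ((@ln R \o +%R 1) - (@ln R \o (cst 1 - id))).
  by apply/funext => v; rewrite /artanh mulrC.
apply: is_derive_eq.
  by apply: is_deriveZ; apply: is_deriveB; [apply: d_plus | apply: d_minus]; lra.
by rewrite [LHS]/GRing.scale /=; field; rewrite !gt_eqF //; nra.
Qed.

Lemma artanh_lt : {in `]-1, 1[%R &, {homo artanh : u v / u < v}}.
Proof.
move=> u v; rewrite !in_itv /= => /andP[u1 u2] /andP[v1 v2] uv.
rewrite /artanh ltr_pM2r // ltr_leB //.
  by rewrite ltr_ln ?posrE; lra.
by rewrite ler_ln ?posrE; lra.
Qed.

Lemma cosh_artanh_sqr u : -1 < u < 1 -> cosh (artanh u) ^+ 2 = (1 - u ^+ 2)^-1.
Proof.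
move=> /andP[u1 u2].
have e2 : expR (artanh u) ^+ 2 = (1 + u) / (1 - u).
  rewrite -expRM_natl mulrC /artanh divfK ?pnatr_eq0 //.
  by rewrite expRB !lnK ?posrE; lra.
rewrite /cosh expRN.
have e0 := expR_gt0 (artanh u); set e := expR (artanh u) in e2 e0 *.
have -> : ((e + e^-1) / 2) ^+ 2 = (e ^+ 2 + 2 + (e ^+ 2)^-1) / 4.
  by field; rewrite gt_eqF.
by rewrite e2; field; rewrite !gt_eqF //; nra.
Qed.

Lemma artanh_ge0 u : 0 <= u < 1 -> 0 <= artanh u.
Proof. by move=> /andP[u0 u1]; rewrite divr_ge0 // subr_ge0 ler_ln ?posrE; lra. Qed.

Lemma cosh_inj : {in [pred t | 0 <= t] &, injective (@cosh R)}.
Proof.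
move=> t s; rewrite !inE => t0 s0 eq_ts.
by case: (ltgtP t s) => // [/(cosh_lt t0)|/(cosh_lt s0)]; rewrite eq_ts ltxx.
Qed.

Lemma artanh_sqrt (x : R) : 0 < x <= 1 -> artanh (Num.sqrt (1 - x ^+ 2)) = arcosh x^-1.
Proof.
move=> /andP[x0 x1].
have x2 : 0 <= 1 - x ^+ 2 by rewrite subr_ge0 expr_le1 // ltW.
have k1 : Num.sqrt (1 - x ^+ 2) < 1.
  by rewrite -[X in _ < X]sqrtr1 ltr_sqrt ?ltr01 //; have := exprn_gt0 2 x0; lra.
have k0 := sqrtr_ge0 (1 - x ^+ 2).
have invx1 : 1 <= x^-1 by rewrite invr_ge1 ?unitfE ?gt_eqF.
apply: cosh_inj; rewrite ?inE ?arcosh_ge0 ?artanh_ge0 ?k0 //.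
rewrite cosh_arcosh //.
apply: (@pexpIrn _ 2) => //; rewrite ?nnegrE ?invr_ge0 ?(ltW x0) //.
  by rewrite (le_trans ler01) ?cosh_ge1.
rewrite cosh_artanh_sqr; last by apply/andP; split; lra.
by rewrite sqr_sqrtr // exprVn; congr (_^-1); ring.
Qed.
End hyperbolic.

Local Notation mu := (@lebesgue_measure _).

Section lebesgue_integral_itv.
Variable R : realType.

Lemma integration_by_substitution_increasing_C1 (F F' G : R -> R) (a b : R) :
  a <= b -> {in `[a, b]%R &, {homo F : s t / s < t}} ->
  (forall t : R, is_derive t 1 F (F' t)) -> continuous F' ->
  {within `[F a, F b], continuous G} ->
  (\int[mu]_(t in `[F a, F b]) (G t)%:E =
   \int[mu]_(t in `[a, b]) (G (F t) * F' t)%:E)%E.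
Proof.
move=> ab incF dF cF' cG.
have F'E : F^`() = F' by apply/funext => t; rewrite derive1E derive_val.
have cF : continuous F.
  by move=> t; apply/differentiable_continuous/derivable1_diffP; case: (dF t).
rewrite integration_by_substitution_increasing //; rewrite ?F'E //.
- by apply/cvg_ex; exists (F' a); exact/cvg_at_right_filter/cF'.
- by apply/cvg_ex; exists (F' b); exact/cvg_at_left_filter/cF'.
- split; first by move=> t _; case: (dF t).
  + exact/cvg_at_right_filter/cF.
  + exact/cvg_at_left_filter/cF.
Qed.

Lemma ge0_integral_itvco_cvgn (f : R -> R) (a b : R) (c : R^nat) :
  nondecreasing_seq c -> (forall n, c n < b) -> c n @[n --> \oo] --> b ->
  measurable_fun `[a, b[ (EFin \o f) -> {in `[a, b[%R, forall t, 0 <= f t} ->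
  (\int[mu]_(t in `[a, c n]) (f t)%:E @[n --> \oo] -->
   \int[mu]_(t in `[a, b[) (f t)%:E)%E.
Proof.
move=> nd_c c_lt_b c_cvg mf f0.
have sub_c n : `[a, c n] `<=` `[a, b[.
  by move=> t /=; rewrite !in_itv /= => /andP[-> /le_lt_trans ->].
have <- : \bigcup_n `[a, c n] = `[a, b[.
  apply/seteqP; split; first by move=> t [n _]; exact: sub_c.
  move=> t /=; rewrite in_itv /= => /andP[a_le_t t_lt_b].
  have [n _ /(_ n (leqnn n))/ltW t_le_c] := cvgr_gt b c_cvg t t_lt_b.
  by exists n => //=; rewrite in_itv /= a_le_t t_le_c.
apply: ge0_nondecreasing_set_cvg_integral => //.
- move=> n m nm; rewrite subsetEset => t /=; rewrite !in_itv /= => /andP[-> tn].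
  exact: le_trans tn (nd_c _ _ nm).
- by move=> n; exact: measurable_funS mf.
- by move=> n t /sub_c tab; rewrite lee_fin f0 // inE.
Qed.

End lebesgue_integral_itv.

Definition Ixy_fun {R : realType} (x t : R) : R :=
  (Num.sqrt (1 - x ^+ 2 * cosh t ^+ 2))^-1.
Definition ellK_fun {R : realType} (k th : R) : R :=
  (Num.sqrt (1 - k ^+ 2 * sin th ^+ 2))^-1.

Section integrands.
Variable R : realType.
Implicit Types x k t th : R.

Lemma continuous_inv_sqrt (h : R -> R) t : {for t, continuous h} -> 0 < h t ->
  {for t, continuous (fun s => (Num.sqrt (h s))^-1)}.
Proof.
move=> ch ht; apply: (@continuous_comp _ _ _ h (fun v => (Num.sqrt v)^-1)) => //.
apply: (@continuous_comp _ _ _ Num.sqrt GRing.inv); first exact: sqrt_continuous.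
by apply: inv_continuous; rewrite gt_eqF // sqrtr_gt0.
Qed.

Lemma Ixy_fun_ge0 x t : 0 <= Ixy_fun x t.
Proof. by rewrite invr_ge0 sqrtr_ge0. Qed.

Lemma ellK_fun_ge0 k th : 0 <= ellK_fun k th.
Proof. by rewrite invr_ge0 sqrtr_ge0. Qed.

Lemma ellK_radicand_ge k th : 1 - k ^+ 2 <= 1 - k ^+ 2 * sin th ^+ 2.
Proof.
by rewrite lerD2l lerN2 ler_piMr ?sqr_ge0 // sin2cos2 lerBlDr lerDl sqr_ge0.
Qed.

Lemma continuous_ellK_fun k : k ^+ 2 < 1 -> continuous (ellK_fun k).
Proof.
move=> k1 th; apply: (continuous_inv_sqrt (h := fun s => 1 - k ^+ 2 * sin s ^+ 2)).
  apply: cvgB; first exact: cvg_cst.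
  by apply: cvgM; [exact: cvg_cst | apply: cvgM; exact: continuous_sin].
by apply: lt_le_trans (ellK_radicand_ge k th); rewrite subr_gt0.
Qed.

Lemma measurable_ellK_fun k (D : set R) : k ^+ 2 < 1 -> measurable D ->
  measurable_fun D (EFin \o ellK_fun k).
Proof.
move=> k1 mD; apply/measurable_EFinP; apply: (measurable_funS measurableT) => //.
by apply: continuous_measurable_fun; exact: continuous_ellK_fun.
Qed.

Lemma ellK_fun_le k th : k ^+ 2 < 1 -> ellK_fun k th <= (Num.sqrt (1 - k ^+ 2))^-1.
Proof.
move=> k1; have k2 : 0 < 1 - k ^+ 2 by rewrite subr_gt0.
have := lt_le_trans k2 (ellK_radicand_ge k th) => r_gt0.
by rewrite lef_pV2 ?posrE ?sqrtr_gt0 // ler_sqrt ?ellK_radicand_ge // ltW.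
Qed.

Lemma ellK_lt_pinfty k : k ^+ 2 < 1 -> (ellK k < +oo)%E.
Proof.
move=> k1; apply: (@le_lt_trans _ _
  (\int[mu]_(th in `[0%R, (pi / 2)%R]) (cst ((Num.sqrt (1 - k ^+ 2))^-1)%:E th))%E).
  apply: ge0_le_integral => //.
  - exact: measurable_ellK_fun.
  - by move=> th _; rewrite /= lee_fin ellK_fun_le.
rewrite integral_cst //= lebesgue_measure_itv /=.
by case: ifP => _; rewrite -?EFinD -EFinM ltry.
Qed.

End integrands.

Section Ixy_fixed_x.
Variables (R : realType) (x : R).
Hypotheses (x_gt0 : 0 < x) (x_lt1 : x < 1).
Implicit Types t : R.

Let T := arcosh x^-1.

Let invx_gt1 : 1 < x^-1. Proof. by rewrite invf_gt1. Qed.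

Let T_gt0 : 0 < T.
Proof.
apply: le_lt_trans (arcosh_ge0 (lexx 1)) _.
by apply: arcosh_lt; rewrite ?inE // ltW.
Qed.

Let itv_co0T_sub : `[0, T[ `<=` `]- T, T[.
Proof.
move=> t /=; rewrite !in_itv /= => /andP[? ->].
by rewrite andbT; have := T_gt0; lra.
Qed.

Lemma Ixy_radicand_gt0 t : `|t| < T -> 0 < 1 - x ^+ 2 * cosh t ^+ 2.
Proof.
move=> tT; have c1 := cosh_ge1 t.
have ct : cosh t < x^-1.
  by rewrite -cosh_norm -[X in _ < X](cosh_arcosh (ltW invx_gt1)) cosh_lt.
have xc : x * cosh t < 1 by rewrite -(ltr_pdivlMl _ _ x_gt0) mulr1.
by rewrite subr_gt0 -exprMn expr_lt1 // mulr_ge0 ?(ltW x_gt0) ?(le_trans ler01 c1).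
Qed.

Lemma Ixy_fun_ge1 t : `|t| < T -> 1 <= Ixy_fun x t.
Proof.
move=> /Ixy_radicand_gt0 r_gt0.
rewrite invr_ge1 ?unitfE ?gt_eqF ?sqrtr_gt0 // -[X in _ <= X]sqrtr1 ler_sqrt //.
by rewrite lerBlDr lerDl mulr_ge0 ?sqr_ge0.
Qed.

Lemma continuous_Ixy_fun t : `|t| < T -> {for t, continuous (Ixy_fun x)}.
Proof.
move=> tT; apply: (continuous_inv_sqrt (h := fun s => 1 - x ^+ 2 * cosh s ^+ 2)).
  apply: cvgB; first exact: cvg_cst.
  by apply: cvgM; [exact: cvg_cst | apply: cvgM; exact: continuous_cosh].
exact: Ixy_radicand_gt0.
Qed.

Lemma measurable_Ixy_fun (D : set R) : measurable D -> D `<=` `]- T, T[ ->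
  measurable_fun D (EFin \o Ixy_fun x).
Proof.
move=> mD DT; apply/measurable_EFinP; apply: (measurable_funS _ DT) => //.
apply: open_continuous_measurable_fun; first exact: interval_open.
move=> t; rewrite inE /= in_itv /= => tT.
by apply: continuous_Ixy_fun; rewrite ltr_norml.
Qed.

Let arcosh_inv_itv y : x < y -> y < 1 -> 0 <= arcosh y^-1 < T.
Proof.
move=> xy y1; have y_gt0 : 0 < y := lt_trans x_gt0 xy.
have invy_ge1 : 1 <= y^-1 by rewrite invr_ge1 ?unitfE ?gt_eqF // ltW.
by rewrite arcosh_ge0 //= arcosh_lt ?inE ?ltf_pV2 ?posrE // ltW.
Qed.

Let Ixy_fun_tail_gt0 s : 0 <= s < T ->
  (0 < \int[mu]_(t in `]s, T[) (Ixy_fun x t)%:E)%E.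
Proof.
move=> /andP[s_ge0 s_lt_T].
apply: (@lt_le_trans _ _ (\int[mu]_(t in `]s, T[) (cst 1%:E t))%E).
  by rewrite integral_cst //= lebesgue_measure_itv /= lte_fin s_lt_T mul1e lte_fin subr_gt0.
apply: ge0_le_integral => //.
- by apply: measurable_Ixy_fun => // t /=; rewrite !in_itv /=; lra.
- move=> t; rewrite /= in_itv /= => /andP[s_lt_t t_lt_T]; rewrite lee_fin Ixy_fun_ge1 //.
  by rewrite ger0_norm //; lra.
Qed.

Let Ixx_split s : 0 <= s < T ->
  (Ixy x x = \int[mu]_(t in `[0%R, s]) (Ixy_fun x t)%:E +
   \int[mu]_(t in `]s, T[) (Ixy_fun x t)%:E)%E.
Proof.
move=> /andP[s_ge0 s_lt_T].
rewrite /Ixy -/T -integral_itv_bndo_bndc; last first.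
  by apply: measurable_Ixy_fun => // t /=; rewrite !in_itv /=; lra.
rewrite (@itv_bndbnd_setU _ _ (BLeft 0) (BRight s) (BLeft T)) ?bnd_simp //.
rewrite ge0_integral_setU //.
- apply: measurable_Ixy_fun; first exact: measurableU.
  by move=> t /=; rewrite !in_itv /= => -[] /andP[? ?]; apply/andP; split; lra.
- rewrite disj_set2E; apply/eqP/seteqP; split => t //=.
  by rewrite !in_itv /= => -[/andP[_ t_le_s] /andP[s_lt_t _]]; lra.
Qed.

Lemma Ixy_lt_Ixx y : x < y -> y < 1 -> (Ixy x x < +oo)%E -> (Ixy x y < Ixy x x)%E.
Proof.
move=> xy y1 Ixx_fin; have S_itv := arcosh_inv_itv xy y1.
have split_Ixx := Ixx_split S_itv; have tail_gt0 := Ixy_fun_tail_gt0 S_itv.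
have Ixy_ge0 : (0 <= Ixy x y)%E.
  by apply: integral_ge0 => t _; rewrite lee_fin Ixy_fun_ge0.
have Ixy_fin : Ixy x y \is a fin_num.
  rewrite (ge0_fin_numE Ixy_ge0); apply: le_lt_trans Ixx_fin.
  rewrite [leRHS]split_Ixx; exact: leeDl (ltW tail_gt0).
rewrite [ltRHS]split_Ixx (lteDl _ Ixy_fin).
exact: tail_gt0.
Qed.

Let k := Num.sqrt (1 - x ^+ 2).

Let k_sqr : k ^+ 2 = 1 - x ^+ 2.
Proof. by rewrite sqr_sqrtr // subr_ge0 expr_le1 // ltW. Qed.

Let k_gt0 : 0 < k.
Proof. by rewrite sqrtr_gt0 subr_gt0 expr_lt1 // ltW. Qed.

Let k_lt1 : k < 1.
Proof.
rewrite -[X in _ < X]sqrtr1 ltr_sqrt ?ltr01 //.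
by have := exprn_gt0 2 x_gt0; lra.
Qed.

Let k_sqr_lt1 : k ^+ 2 < 1.
Proof. by rewrite k_sqr; have := exprn_gt0 2 x_gt0; lra. Qed.

Let ksin_itv th : -1 < k * sin th < 1.
Proof.
have := sin_geN1 th; have := sin_le1 th; have := k_gt0; have := k_lt1.
by move=> *; apply/andP; split; nra.
Qed.

Let ksin_sqr_lt1 th : 0 < 1 - (k * sin th) ^+ 2.
Proof. by have /andP[? ?] := ksin_itv th; nra. Qed.

Let tau th := artanh (k * sin th).
Let dtau th := (1 - (k * sin th) ^+ 2)^-1 * (k * cos th).

Let is_derive_tau (th : R) : is_derive th 1 tau (dtau th).
Proof.
apply: is_derive_eq.
  exact: (is_derive1_comp (f := @artanh R) (g := k \*: sin)
    (is_derive_artanh (ksin_itv th)) (is_deriveZ k (is_derive_sin th))).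
by [].
Qed.

Let continuous_tau : continuous tau.
Proof.
by move=> th; apply/differentiable_continuous/derivable1_diffP; case: (is_derive_tau th).
Qed.

Let continuous_dtau : continuous dtau.
Proof.
move=> th; have ksin_cvg : k * sin s @[s --> th] --> k * sin th.
  by apply: cvgM; [exact: cvg_cst | exact: continuous_sin].
apply: cvgM; last by apply: cvgM; [exact: cvg_cst | exact: continuous_cos].
apply: cvgV; first by rewrite gt_eqF.
by apply: cvgB; [exact: cvg_cst | exact: cvgM].
Qed.

Let tau_lt : {in `[- (pi / 2), pi / 2]%R &, {homo tau : a b / a < b}}.
Proof.
move=> a b a_itv b_itv ab; apply: artanh_lt; rewrite ?in_itv /= ?ksin_itv //.
by rewrite ltr_pM2l // ltr_sin.
Qed.

Let tau0 : tau 0 = 0.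
Proof. by rewrite /tau sin0 mulr0 artanh0. Qed.

Let tau_pihalf : tau (pi / 2) = T.
Proof. by rewrite /tau sin_pihalf mulr1 artanh_sqrt // x_gt0 ltW. Qed.

Let Ixy_fun_tau th : - (pi / 2) < th < pi / 2 ->
  Ixy_fun x (tau th) * dtau th = ellK_fun k th.
Proof.
move=> th_itv; have kcos_gt0 : 0 < k * cos th by rewrite mulr_gt0 ?cos_gt0_pihalf.
have u_gt0 := ksin_sqr_lt1 th.
have w_gt0 : 0 < Num.sqrt (1 - (k * sin th) ^+ 2) by rewrite sqrtr_gt0.
have w2 := sqr_sqrtr (ltW u_gt0).
set w := Num.sqrt _ in w_gt0 w2.
have radicand : 1 - x ^+ 2 * cosh (tau th) ^+ 2 = (k * cos th / w) ^+ 2.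
  rewrite cosh_artanh_sqr // expr_div_n w2 !exprMn cos2sin2.
  have -> : x ^+ 2 = 1 - k ^+ 2 by rewrite k_sqr; ring.
  by field; rewrite gt_eqF.
rewrite /Ixy_fun radicand sqrtr_sqr gtr0_norm ?divr_gt0 // /ellK_fun -exprMn -/w /dtau -w2.
by field; rewrite !gt_eqF ?cos_gt0_pihalf.
Qed.

Let integral_Ixy_fun_tau (c : R) : 0 <= c < pi / 2 ->
  (\int[mu]_(t in `[0%R, tau c]) (Ixy_fun x t)%:E =
   \int[mu]_(th in `[0%R, c]) (ellK_fun k th)%:E)%E.
Proof.
move=> /andP[c_ge0 c_lt].
have sub_pi : `[0, c] `<=` `]- (pi / 2), pi / 2[.
  by move=> th /=; rewrite !in_itv /= => /andP[? ?]; apply/andP; split; lra.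
rewrite -[X in `[X, _]]tau0 (@integration_by_substitution_increasing_C1 _ tau dtau
  (Ixy_fun x) 0 c c_ge0 _ is_derive_tau continuous_dtau).
- apply: eq_integral => th /[!inE] /sub_pi; rewrite /= in_itv /= => th_itv.
  by rewrite Ixy_fun_tau.
- move=> a b; rewrite !in_itv /= => /andP[? ?] /andP[? ?] ab.
  by apply: tau_lt => //; rewrite in_itv /=; apply/andP; split; lra.
- apply: continuous_in_subspaceT => t; rewrite inE /= in_itv /= tau0 => /andP[t_ge0 t_le].
  apply: continuous_Ixy_fun; rewrite ger0_norm // -tau_pihalf (le_lt_trans t_le) //.
  by apply: tau_lt => //; rewrite ?in_itv /=; apply/andP; split; lra.
Qed.

Let pi2_gt0 : 0 < pi / 2 :> R.
Proof. by rewrite divr_gt0 ?pi_gt0. Qed.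

Let c n : R := pi / 2 * (1 - harmonic n).

Let c_itv n : 0 <= c n < pi / 2.
Proof.
have h_gt0 : 0 < harmonic n :> R := harmonic_gt0 n.
have h_le1 : harmonic n <= 1 :> R by rewrite /= invr_le1 ?ler1n ?unitfE ?pnatr_eq0.
by rewrite /c; apply/andP; split; have := pi2_gt0; nra.
Qed.

Let c_nd : nondecreasing_seq c.
Proof.
by move=> n m nm; rewrite ler_pM2l // lerD2l lerN2 lef_pV2 ?posrE // ler_nat.
Qed.

Let c_cvg : c n @[n --> \oo] --> pi / 2.
Proof.
have -> : pi / 2 = pi / 2 * (1 - 0) :> R by rewrite subr0 mulr1.
apply: cvgM; first exact: cvg_cst.
by apply: cvgB; [exact: cvg_cst | exact: cvg_harmonic].
Qed.

Let c_pi_itv n : c n \in `[- (pi / 2), pi / 2]%R.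
Proof. by have /andP[? ?] := c_itv n; rewrite in_itv /=; apply/andP; split; lra. Qed.

Let cvgn_integral_Ixy_fun :
  (\int[mu]_(t in `[0%R, tau (c n)]) (Ixy_fun x t)%:E)%E @[n --> \oo] -->
  (\int[mu]_(t in `[0%R, T[) (Ixy_fun x t)%:E)%E.
Proof.
have pi2_itv : (pi / 2 : R) \in `[- (pi / 2), pi / 2]%R.
  by rewrite in_itv /= lexx andbT; have := pi2_gt0; lra.
apply: (ge0_integral_itvco_cvgn (c := tau \o c)).
- move=> n m /c_nd /=; rewrite le_eqVlt => /predU1P[-> // | cnm].
  exact/ltW/tau_lt.
- by move=> n; rewrite /= -tau_pihalf tau_lt //; have /andP[] := c_itv n.
- by rewrite -tau_pihalf; apply: cvg_comp c_cvg _; exact: continuous_tau.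
- exact: measurable_Ixy_fun.
- by move=> t _; exact: Ixy_fun_ge0.
Qed.

Let cvgn_integral_ellK_fun :
  (\int[mu]_(th in `[0%R, c n]) (ellK_fun k th)%:E)%E @[n --> \oo] -->
  (\int[mu]_(th in `[0%R, (pi / 2)%R[) (ellK_fun k th)%:E)%E.
Proof.
apply: ge0_integral_itvco_cvgn => //.
- by move=> n; have /andP[] := c_itv n.
- exact: measurable_ellK_fun.
- by move=> t _; exact: ellK_fun_ge0.
Qed.

Lemma Ixx_ellK : Ixy x x = ellK k.
Proof.
have := cvgn_integral_Ixy_fun.
have -> : (fun n => \int[mu]_(t in `[0%R, tau (c n)]) (Ixy_fun x t)%:E)%E =
    (fun n => \int[mu]_(th in `[0%R, c n]) (ellK_fun k th)%:E)%E.
  by apply/funext => n; rewrite integral_Ixy_fun_tau.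
move=> /cvg_unique/(_ cvgn_integral_ellK_fun) Ixx_K.
rewrite /Ixy /ellK -/T -!integral_itv_bndo_bndc.
- exact: Ixx_K.
- exact: measurable_ellK_fun.
- exact: measurable_Ixy_fun.
Qed.

End Ixy_fixed_x.

Theorem lemma6 (R : realType) (x y : R) (hx : 0 < x) (hxy : x <= y) (hy : y < 1) :
  (Ixy x y <= ellK (Num.sqrt (1 - x ^+ 2)))%E /\
  (Ixy x y = ellK (Num.sqrt (1 - x ^+ 2)) <-> x = y).
Proof.
have x_lt1 : x < 1 := le_lt_trans hxy hy.
have k_sqr_lt1 : Num.sqrt (1 - x ^+ 2) ^+ 2 < 1.
  rewrite sqr_sqrtr ?subr_ge0 ?expr_le1 ?ltW //.
  by have := exprn_gt0 2 hx; lra.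
have Ixx_fin : (Ixy x x < +oo)%E.
  by rewrite (Ixx_ellK hx x_lt1); exact: ellK_lt_pinfty.
rewrite -(Ixx_ellK hx x_lt1).
move: hxy; rewrite le_eqVlt => /predU1P[<- | x_lt_y]; first by split.
have Ixy_lt := Ixy_lt_Ixx hx x_lt1 x_lt_y hy Ixx_fin.
split; first exact: ltW.
split => [/eqP | x_eq_y]; first by rewrite (lt_eqF Ixy_lt).
by move: x_lt_y; rewrite x_eq_y ltxx.
Qed.
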